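(* If $G$ is a connected locally Dirac graph of order $n \ge 8$, then the minimum degree satisfies $\delta(G) \ge 5$.
   Context: A graph $G$ is locally Dirac if for every vertex $v \in V(G)$ and every $u \in N(v)$, $\deg_{\langle N(v)\rangle}(u) \ge \deg_G(v)/2$, where $N(v)$ is the open neighbourhood of $v$ and $\langle N(v)\rangle$ the subgraph induced by it. *)

From mathcomp Require Import all_boot.
Set Implicit Arguments. Unset Strict Implicit. Unset Printing Implicit Defensive.

Definition simple_graph (T : finType) (e : rel T) : Prop :=
  symmetric e /\ irreflexive e.

Definition nbhd (T : finType) (e : rel T) (v : T) : {set T} := [set u | e v u].

Definition deg (T : finType) (e : rel T) (v : T) : nat := #|nbhd e v|.

Definition deg_in_nbhd (T : finType) (e : rel T) (v u : T) : nat :=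
  #|nbhd e u :&: nbhd e v|.

(* Locally Dirac: for all v and u in N(v), deg_<N(v)>(u) >= deg_G(v)/2
   (stated without division: 2 * deg_<N(v)>(u) >= deg_G(v)). *)
Definition locally_dirac (T : finType) (e : rel T) : Prop :=
  forall v u, u \in nbhd e v -> deg e v <= 2 * deg_in_nbhd e v u.

Definition connected_graph (T : finType) (e : rel T) : Prop :=
  forall x y : T, connect e x y.

From mathcomp Require Import all_boot.
From mathcomp Require Import zify.

Set Implicit Arguments. Unset Strict Implicit. Unset Printing Implicit Defensive.

(* Suppose deg v <= 4, and let A = N(v) and X be the vertices at distance 2 from v.
   Applying the locally Dirac condition at u in A to the edges uv and uw (w in X)
   shows that every u in A has fewer neighbours in X than in A (so at most 2), and
   that every w in X has at least 3 neighbours in A; double counting the edges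
   between A and X gives |X| <= 2.  The condition at x in X, applied to an edge
   into A and to an edge leaving {v} u A u X, then forces two incompatible
   inequalities, so {v} u A u X is closed under adjacency.  By connectivity it is
   the whole graph, which therefore has at most 1 + 4 + 2 = 7 vertices. *)

Definition second_nbhd (T : finType) (e : rel T) (v : T) : {set T} :=
  [set w | [&& w != v, w \notin nbhd e v & [exists u in nbhd e v, e u w]]].

Section LocallyDirac.

Variables (T : finType) (e : rel T).
Hypotheses (e_sym : symmetric e) (e_irr : irreflexive e) (e_ld : locally_dirac e).

Local Notation N := (nbhd e).

Lemma in_nbhd x y : (y \in N x) = e x y.
Proof. by rewrite inE. Qed.

Lemma nbhd_sym x y : (y \in N x) = (x \in N y).
Proof. by rewrite !in_nbhd e_sym. Qed.

Lemma notin_nbhd_self x : x \notin N x.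
Proof. by rewrite in_nbhd e_irr. Qed.

Lemma deg_le_common_nbhd x y : e x y -> deg e x <= 2 * #|N x :&: N y|.
Proof. by move=> exy; rewrite setIC; apply: e_ld; rewrite in_nbhd. Qed.

Lemma card_sub_setU_le (B C D : {set T}) : D \subset B :|: C -> #|D| <= #|B| + #|C|.
Proof. by move/subset_leq_card/leq_trans; apply; rewrite leq_card_setU. Qed.

Lemma sum_card_nbhdI (B C : {set T}) :
  \sum_(w in B) #|N w :&: C| = \sum_(u in C) #|N u :&: B|.
Proof.
have card_nbhdI x (D : {set T}) : #|N x :&: D| = \sum_(y in D) e x y.
  by rewrite -sum1_card big_mkcond [RHS]big_mkcond; apply: eq_bigr => y _;
     rewrite !inE; case: (e x y); case: (y \in D).
under eq_bigr do rewrite card_nbhdI.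
rewrite exchange_big; apply: eq_bigr => u _; rewrite card_nbhdI.
by apply: eq_bigr => w _; rewrite e_sym.
Qed.

(* The common neighbours of x and z all lie in [(N x :\: B) :\ z]. *)
Lemma card_nbhdI_add2_le_nbhdD x z (B : {set T}) :
  z \in N x -> z \notin B -> [disjoint N z & B] -> #|N x :&: B| + 2 <= #|N x :\: B|.
Proof.
move=> zx zB dzB; have exz : e x z by rewrite -in_nbhd.
have := deg_le_common_nbhd exz.
have common_sub : N x :&: N z \subset (N x :\: B) :\ z.
  apply/subsetP => y; rewrite !inE => /andP[exy ezy].
  have yz : y != z by apply: contraTneq ezy => ->; rewrite e_irr.
  by rewrite yz exy (disjointFr dzB) // in_nbhd.
have zxB : z \in N x :\: B by rewrite inE zB zx.
have := subset_leq_card common_sub; have := cardsID B (N x).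
by rewrite (cardsD1 z (N x :\: B)) zxB /deg; lia.
Qed.

Section SmallDegreeVertex.

Variable v : T.

Local Notation A := (N v).
Local Notation X := (second_nbhd e v).

Lemma mem_second_nbhd u w : u \in A -> e u w -> w != v -> w \notin A -> w \in X.
Proof.
by move=> uA euw wv wA; rewrite [w \in X]inE wv wA; apply/exists_inP; exists u.
Qed.

Lemma second_nbhdP w :
  reflect [/\ w != v, w \notin A & exists2 u, u \in A & e u w] (w \in X).
Proof.
rewrite [w \in X]inE.
by apply: (iffP and3P) => -[wv wA /exists_inP ex]; split.
Qed.

Lemma second_nbhd_common_nbhd u w y :
  u \in A -> w \notin A -> y \in N u -> y \in N w -> y \notin A -> y \in X.
Proof.
move=> uA wA yu yw yA; apply: mem_second_nbhd uA _ _ yA; first by rewrite -in_nbhd.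
by apply: contraNneq wA => yv; rewrite nbhd_sym -yv.
Qed.

Lemma card_nbhdI_lt_deg u : u \in A -> #|N u :&: A| < deg e v.
Proof.
move=> uA; rewrite /deg (cardsD1 u A) uA ltnS; apply: subset_leq_card.
by apply/subsetP => y; rewrite !inE => /andP[euy ->]; rewrite andbT;
   apply: contraTneq euy => ->; rewrite e_irr.
Qed.

Lemma card_nbhdI_add_second_lt_deg u : u \in A -> #|N u :&: A| + #|N u :&: X| < deg e u.
Proof.
move=> uA; have split_v : v |: (N u :&: X) \subset N u :\: A.
  apply/subsetP => y; rewrite in_setU1 in_setI in_setD.
  case/orP => [/eqP -> | /andP[yu /second_nbhdP[_ yA _]]].
    by rewrite -nbhd_sym uA notin_nbhd_self.
  by rewrite yu yA.
have := subset_leq_card split_v; have := cardsID A (N u).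
have vX : v \notin N u :&: X.
  by rewrite inE; apply/nandP; right; apply/negP => /second_nbhdP[/eqP].
by rewrite cardsU1 vX /deg; lia.
Qed.

Lemma card_nbhdI_second_lt u : u \in A -> #|N u :&: X| < #|N u :&: A|.
Proof.
move=> uA; have euv : e u v by rewrite e_sym -in_nbhd.
by have := deg_le_common_nbhd euv; have := card_nbhdI_add_second_lt_deg uA; lia.
Qed.

Lemma card_second_nbhdI_ge3 w : w \in X -> 3 <= #|N w :&: A|.
Proof.
case/second_nbhdP => wv wA [u uA euw].
have wu : w \in N u :&: X by rewrite inE in_nbhd euw (mem_second_nbhd uA).
have uw : u \in N w :&: A by rewrite inE in_nbhd e_sym euw.
have common_sub : N u :&: N w \subset ((N w :&: A) :\ u) :|: ((N u :&: X) :\ w).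
  apply/subsetP => y /setIP[yu yw]; rewrite in_setU !in_setD1 !in_setI yu yw.
  have [yNu yNw] : y != u /\ y != w.
    by split; [apply: contraTneq yu | apply: contraTneq yw] => ->; apply: notin_nbhd_self.
  rewrite yNu yNw /=; case: (boolP (y \in A)) => //= yA.
  exact: second_nbhd_common_nbhd uA wA yu yw yA.
have := card_sub_setU_le common_sub; have := deg_le_common_nbhd euw.
have := card_nbhdI_add_second_lt_deg uA.
have := card_nbhdI_second_lt uA.
by rewrite (cardsD1 u (N w :&: A)) (cardsD1 w (N u :&: X)) uw wu; lia.
Qed.

Lemma card_second_nbhd_le2 : deg e v <= 4 -> #|X| <= 2.
Proof.
move=> degv; have := sum_card_nbhdI X A.
have lb : \sum_(w in X) 3 <= \sum_(w in X) #|N w :&: A|.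
  by apply: leq_sum => w; apply: card_second_nbhdI_ge3.
have ub : \sum_(u in A) #|N u :&: X| <= \sum_(u in A) 2.
  apply: leq_sum => u uA.
  by have := card_nbhdI_second_lt uA; have := card_nbhdI_lt_deg uA; lia.
by move: lb ub; rewrite !sum_nat_const /deg in degv *; lia.
Qed.

Lemma card_second_nbhd_nbhdD_le x :
  #|X| <= 2 -> x \in X -> #|N x :\: A| <= #|N x :&: A|.
Proof.
move=> X2 xX; case/second_nbhdP: (xX) => _ xA [u uA eux].
have exu : e x u by rewrite e_sym.
have ux : u \in N x :&: A by rewrite in_setI in_nbhd exu uA.
have common_sub : N x :&: N u \subset ((N x :&: A) :\ u) :|: (N x :&: X).
  apply/subsetP => y /setIP[yx yu]; rewrite in_setU in_setD1 !in_setI yx.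
  have yNu : y != u by apply: contraTneq yu => ->; apply: notin_nbhd_self.
  rewrite yNu /=; case: (boolP (y \in A)) => //= yA.
  exact: second_nbhd_common_nbhd uA xA yu yx yA.
have xX_sub : N x :&: X \subset X :\ x.
  apply/subsetP => y /setIP[yx yX]; rewrite in_setD1 yX andbT.
  by apply: contraTneq yx => ->; apply: notin_nbhd_self.
have := deg_le_common_nbhd exu.
have := card_sub_setU_le common_sub; have := subset_leq_card xX_sub.
move: X2; rewrite /deg -(cardsID A (N x)) (cardsD1 u (N x :&: A)) (cardsD1 x X) ux xX.
lia.
Qed.

Lemma second_nbhd_adj_closed x z :
  #|X| <= 2 -> x \in X -> e x z -> z \in v |: (A :|: X).
Proof.
move=> X2 xX exz; apply: contraT.
rewrite in_setU1 in_setU !negb_or => /andP[zv /andP[zA zX]].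
have dzA : [disjoint N z & A].
  apply/pred0P => y /=; apply/negP => /andP[ezy yA]; move: zX.
  by rewrite (mem_second_nbhd (u := y)) // e_sym -in_nbhd.
have zx : z \in N x by rewrite in_nbhd.
have := leq_trans (card_nbhdI_add2_le_nbhdD zx zA dzA) (card_second_nbhd_nbhdD_le X2 xX).
by rewrite -{2}[#|_|]addn0 leq_add2l.
Qed.

Lemma ball2_adj_closed x z :
  #|X| <= 2 -> e x z -> x \in v |: (A :|: X) -> z \in v |: (A :|: X).
Proof.
move=> X2 exz; rewrite !(in_setU1, in_setU) => /or3P[/eqP xv | xA | xX].
- by rewrite -xv in_nbhd exz orbT.
- have [// | zv] := eqVneq z v.
  have [// | zA] := boolP (z \in A).
  by rewrite (mem_second_nbhd xA exz) ?orbT.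
- by have := second_nbhd_adj_closed X2 xX exz; rewrite !(in_setU1, in_setU).
Qed.

Lemma card_ball2_le7 : deg e v <= 4 -> #|v |: (A :|: X)| <= 7.
Proof.
move=> degv; have := card_second_nbhd_le2 degv.
have := cardsU A X; rewrite cardsU1 /deg in degv *; lia.
Qed.

End SmallDegreeVertex.

Lemma connected_closed_setT (S : {set T}) x :
  connected_graph e -> (forall y z, e y z -> y \in S -> z \in S) -> x \in S ->
  S = [set: T].
Proof.
move=> conn clS xS; apply/setP => y; rewrite inE.
have S_closed : closed e (mem S).
  by move=> y1 z1 e1; apply/idP/idP; apply: clS; rewrite // e_sym.
by rewrite -(closed_connect S_closed (conn x y)).
Qed.

End LocallyDirac.

Theorem mainTheorem6 (T : finType) (e : rel T) :
  simple_graph e -> connected_graph e -> locally_dirac e -> 8 <= #|T| ->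
  forall v : T, 5 <= deg e v.
Proof.
move=> [e_sym e_irr] conn e_ld cardT v; rewrite ltnNge; apply/negP => degv.
have S_all : v |: (nbhd e v :|: second_nbhd e v) = [set: T].
  apply: (connected_closed_setT e_sym conn _ (setU11 v _)) => y z.
  exact: ball2_adj_closed (card_second_nbhd_le2 e_sym e_irr e_ld degv).
by have := card_ball2_le7 e_sym e_irr e_ld degv; rewrite S_all cardsT; lia.
Qed.
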